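(* Let $f$ be convex, $C^2$, with $\nabla^2 f\succ0$ everywhere, and $L_{\text{semi}}$-semi-strongly self-concordant; let $L_{\text{est}}\ge L_{\text{semi}}$ and $0<c<1$. If $x_k$ satisfies $\|\nabla f(x_k)\|_{x_k}^*\le\frac{(2c+1)^2-1}{2L_{\text{est}}}$ and $x_{k+1}$ is the AICN iterate computed from $x_k$, then $$[\nabla^2 f(x_{k+1})]^{-1}\preceq(1-c)^{-2}[\nabla^2 f(x_k)]^{-1}.$$
   Context: Local norms: $\|h\|_x=\langle\nabla^2 f(x)h,h\rangle^{1/2}$, $\|g\|_x^*=\langle g,[\nabla^2 f(x)]^{-1}g\rangle^{1/2}$; $\|H\|_{op}=\sup_{v\neq0}\|Hv\|_x^*/\|v\|_x$ at base point $x$. $f$ is $L_{\text{semi}}$-semi-strongly self-concordant if $\|\nabla^2 f(y)-\nabla^2 f(x)\|_{op}\le L_{\text{semi}}\|y-x\|_x$ for all $x,y$ (operator norm at base point $x$). AICN step with parameter $L_{\text{est}}>0$: $x_{k+1}=x_k-\alpha_k[\nabla^2 f(x_k)]^{-1}\nabla f(x_k)$ with $\alpha_k=\frac{-1+\sqrt{1+2L_{\text{est}}\|\nabla f(x_k)\|_{x_k}^*}}{L_{\text{est}}\|\nabla f(x_k)\|_{x_k}^*}$ (and $\alpha_k:=1$ if $\nabla f(x_k)=0$). $\preceq$ is the Loewner order. *)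

From HB Require Import structures.
From mathcomp Require Import all_boot all_order all_algebra.
From mathcomp Require Import all_classical all_reals all_analysis.
Set Implicit Arguments. Unset Strict Implicit. Unset Printing Implicit Defensive.
Import Order.TTheory GRing.Theory Num.Theory.
Import numFieldNormedType.Exports.
Local Open Scope ring_scope.

Section Defs.
Variables (R : realType) (n : nat).
Notation vec := 'cV[R]_n.
Notation mat := 'M[R]_n.

Definition dotv (u v : vec) : R := \sum_(i < n) u i ord0 * v i ord0.

Definition qform (A : mat) (v : vec) : R := dotv (A *m v) v.

Definition convex_fun (f : vec -> R) : Prop :=
  forall (x y : vec) (t : R), 0 <= t <= 1 ->
    f (t *: x + (1 - t) *: y) <= t * f x + (1 - t) * f y.

(* g is the gradient of f and H is the Hessian of f, with f of class C^2:
   directional derivatives of f are <g x, v>, directional derivatives of g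
   are H x v, and H is continuous (continuous Gateaux derivatives give C^2). *)
Definition is_C2_with (f : vec -> R) (g : vec -> vec) (H : vec -> mat) : Prop :=
  (forall x v : vec, is_derive x v f (dotv (g x) v)) /\
  (forall x v : vec, is_derive x v g (H x *m v)) /\
  continuous H.

Definition pos_def (A : mat) : Prop := forall v : vec, v != 0 -> 0 < qform A v.

Definition loewner_le (A B : mat) : Prop := forall v : vec, qform A v <= qform B v.

Definition lnorm (H : vec -> mat) (x h : vec) : R := Num.sqrt (qform (H x) h).
Definition dnorm (H : vec -> mat) (x g : vec) : R := Num.sqrt (qform (invmx (H x)) g).

(* ||H(y) - H(x)||_op <= L ||y - x||_x, where the operator norm at base point x
   is sup_{v <> 0} ||(H y - H x) v||_x^* / ||v||_x ; "sup <= bound" is unfolded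
   pointwise (multiplied through by ||v||_x > 0; trivial for v = 0). *)
Definition semi_strongly_sc (H : vec -> mat) (L : R) : Prop :=
  forall x y v : vec,
    dnorm H x ((H y - H x) *m v) <= L * lnorm H x (y - x) * lnorm H x v.

Definition aicn_alpha (g : vec -> vec) (H : vec -> mat) (Lest : R) (x : vec) : R :=
  if g x == 0 then 1
  else (-1 + Num.sqrt (1 + 2 * Lest * dnorm H x (g x))) / (Lest * dnorm H x (g x)).

Definition aicn_step (g : vec -> vec) (H : vec -> mat) (Lest : R) (x : vec) : vec :=
  x - aicn_alpha g H Lest x *: (invmx (H x) *m g x).

End Defs.

From HB Require Import structures.
From mathcomp Require Import all_boot all_order all_algebra.
From mathcomp Require Import all_classical all_reals all_analysis.
From mathcomp Require Import ring lra.
Import Order.TTheory GRing.Theory Num.Theory.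
Import numFieldNormedType.Exports.
Local Open Scope ring_scope.
Set Implicit Arguments. Unset Strict Implicit. Unset Printing Implicit Defensive.

(* With rho := L_est ||x_{k+1} - x_k||_{x_k}, the AICN step length is chosen so
   that rho = sqrt(1 + 2 L_est ||grad f(x_k)||^*_{x_k}) - 1, which the gradient
   bound makes at most 2c.  Semi-strong self-concordance and the Cauchy-Schwarz
   inequality |<z, h>| <= ||z||^*_x ||h||_x give
   H(y) <= (1 + L_est ||y - x||_x) H(x) in the Loewner order.  Used from x_k this
   bounds t := L_est ||x_k - x_{k+1}||_{x_{k+1}} by t^2 <= rho^2 (1 + rho), hence
   (1 - c)^2 (1 + t) <= 1; used from x_{k+1} it then gives
   (1 - c)^2 H(x_k) <= H(x_{k+1}), and inversion reverses the Loewner order.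
   Cauchy-Schwarz needs the Hessian to be symmetric, which is Schwarz's theorem:
   the mean value theorem expresses a second difference of f through either mixed
   derivative, and continuity of H identifies the two in the limit. *)

Section QuadraticForms.
Variables (R : realType) (n : nat).
Implicit Types (u v w z : 'cV[R]_n) (A B M : 'M[R]_n).

Lemma dotvC u v : dotv u v = dotv v u.
Proof. by apply: eq_bigr => i _; rewrite mulrC. Qed.

Lemma dotvDl u v w : dotv (u + v) w = dotv u w + dotv v w.
Proof. by rewrite /dotv -big_split; apply: eq_bigr => i _; rewrite !mxE mulrDl. Qed.

Lemma dotvZl (k : R) u w : dotv (k *: u) w = k * dotv u w.
Proof. by rewrite /dotv mulr_sumr; apply: eq_bigr => i _; rewrite !mxE mulrA. Qed.

Lemma dotvNl u w : dotv (- u) w = - dotv u w.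
Proof. by rewrite -scaleN1r dotvZl mulN1r. Qed.

Lemma dotvBl u v w : dotv (u - v) w = dotv u w - dotv v w.
Proof. by rewrite dotvDl dotvNl. Qed.

Lemma dotv0l w : dotv 0 w = 0.
Proof. by rewrite /dotv big1 // => i _; rewrite mxE mul0r. Qed.

Lemma dotvDr u v w : dotv w (u + v) = dotv w u + dotv w v.
Proof. by rewrite dotvC dotvDl !(dotvC w). Qed.

Lemma dotvZr (k : R) u w : dotv w (k *: u) = k * dotv w u.
Proof. by rewrite dotvC dotvZl dotvC. Qed.

Lemma dotvNr u w : dotv w (- u) = - dotv w u.
Proof. by rewrite dotvC dotvNl dotvC. Qed.

Lemma dotv0r w : dotv w 0 = 0.
Proof. by rewrite dotvC dotv0l. Qed.

Lemma qformZ (k : R) M v : qform (k *: M) v = k * qform M v.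
Proof. by rewrite /qform -scalemxAl dotvZl. Qed.

Lemma qformN M v : qform M (- v) = qform M v.
Proof. by rewrite /qform mulmxN dotvNl dotvNr opprK. Qed.

Lemma qformZr M (k : R) v : qform M (k *: v) = k ^+ 2 * qform M v.
Proof. by rewrite /qform -scalemxAr dotvZl dotvZr mulrA -expr2. Qed.

Lemma qform_ge0 A v : pos_def A -> 0 <= qform A v.
Proof.
move=> pA; have [->|v0] := eqVneq v 0; last exact/ltW/pA.
by rewrite /qform dotv0r.
Qed.

Lemma pos_def_unitmx A : pos_def A -> A \in unitmx.
Proof.
move=> pA; rewrite -unitmx_tr -row_free_unit; apply: inj_row_free => u Au0.
apply/eqP; apply/negPn/negP => u0.
have uT0 : u^T != 0 by apply: contra u0 => /eqP uT0; rewrite -(trmxK u) uT0 trmx0.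
have := pA _ uT0; rewrite /qform.
have -> : A *m u^T = 0 by rewrite -(trmxK A) -trmx_mul Au0 trmx0.
by rewrite dotv0l ltxx.
Qed.

Lemma qform_invmxE A z : pos_def A -> qform (invmx A) z = qform A (invmx A *m z).
Proof. by move=> pA; rewrite /qform mulKVmx ?pos_def_unitmx // dotvC. Qed.

Definition self_adjoint A := forall u v, dotv (A *m v) u = dotv (A *m u) v.

Lemma qform_subZ A u w (t : R) : self_adjoint A ->
  qform A (u - t *: w) = qform A u - 2 * t * dotv (A *m u) w + t ^+ 2 * qform A w.
Proof.
move=> sA; rewrite /qform mulmxBr -scalemxAr.
rewrite dotvDl dotvNl !dotvDr !dotvNr !dotvZl !dotvZr (sA u w); ring.
Qed.

Lemma dotv_sqr_le A u w : self_adjoint A -> pos_def A ->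
  dotv (A *m u) w ^+ 2 <= qform A u * qform A w.
Proof.
move=> sA pA; have [->|w0] := eqVneq w 0.
  by rewrite dotv0r expr0n /= /qform mulmx0 dotv0l mulr0.
have qw0 := pA _ w0.
set b := dotv (A *m u) w; set t := b / qform A w.
have := qform_ge0 (u - t *: w) pA.
rewrite qform_subZ // => ge0; rewrite -subr_ge0.
have -> : qform A u * qform A w - b ^+ 2 =
    (qform A u - 2 * t * b + t ^+ 2 * qform A w) * qform A w.
  by rewrite /t; field; rewrite gt_eqF.
by rewrite mulr_ge0 // ltW.
Qed.

Lemma dotv_le_dnorm_lnorm A z h : self_adjoint A -> pos_def A ->
  `|dotv z h| <= Num.sqrt (qform (invmx A) z) * Num.sqrt (qform A h).
Proof.
move=> sA pA; rewrite qform_invmxE // -sqrtrM ?qform_ge0 // -sqrtr_sqr.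
rewrite ler_sqrt ?mulr_ge0 ?qform_ge0 //.
by rewrite -{1}(mulKVmx (pos_def_unitmx pA) z) dotv_sqr_le.
Qed.

Lemma loewner_invmx A B (k : R) : self_adjoint A -> pos_def A -> pos_def B ->
  0 < k -> (forall v, k * qform A v <= qform B v) ->
  forall v, qform (invmx B) v <= k^-1 * qform (invmx A) v.
Proof.
move=> sA pA pB k0 kAB v.
rewrite !qform_invmxE //.
set u := invmx B *m v; set w := invmx A *m v.
set p := qform B u; set q := qform A w.
have p0 : 0 <= p := qform_ge0 u pB.
have Au : qform A u <= k^-1 * p by rewrite ler_pdivlMl.
have CS : p ^+ 2 <= q * (k^-1 * p).
  have pE : p = dotv (A *m w) u by rewrite /p /qform /u /w !mulKVmx ?pos_def_unitmx.
  rewrite [X in X ^+ 2]pE; apply: le_trans (dotv_sqr_le w u sA pA) _.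
  by rewrite ler_wpM2l ?qform_ge0.
have [->|p_neq0] := eqVneq p 0; first by rewrite mulr_ge0 ?qform_ge0 // invr_ge0 ltW.
have pp : 0 < p by rewrite lt_def p_neq0.
by rewrite -(ler_pM2r pp) -expr2 mulrAC mulrC.
Qed.

Definition sum_abs (u : 'cV[R]_n) : R := \sum_(i < n) `|u i ord0|.

Lemma sum_abs_ge0 u : 0 <= sum_abs u.
Proof. by apply: sumr_ge0 => i _. Qed.

(* [`|M|] is the largest absolute value of an entry of [M]. *)
Lemma dotv_mulmx_abs_le (M : 'M[R]_n) u v :
  `|dotv (M *m v) u| <= `|M| * (sum_abs u * sum_abs v).
Proof.
rewrite /dotv /sum_abs big_distrlr mulr_sumr; apply: le_trans (ler_norm_sum _ _ _) _.
apply: ler_sum => i _; rewrite normrM mxE mulr_sumr.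
apply: le_trans (ler_wpM2r (normr_ge0 _) (ler_norm_sum _ _ _)) _.
rewrite mulr_suml; apply: ler_sum => j _.
rewrite normrM -mulrA [`|v _ _| * _]mulrC; apply: ler_wpM2r; first exact: mulr_ge0.
rewrite [leRHS]/Num.Def.normr /= mx_normrE.
exact: (le_bigmax _ (fun ij : 'I_n * 'I_n => `|M ij.1 ij.2|) (i, j)).
Qed.

End QuadraticForms.

Section LineDerivatives.
Variables (R : realType) (n : nat).
Implicit Types (a p u w : 'cV[R]_n).

Lemma is_derive_along_line (F : 'cV[R]_n -> R) a u (s0 d : R) :
  is_derive (a + s0 *: u) u F d -> is_derive s0 1 (fun s => F (a + s *: u)) d.
Proof.
case=> dF <-.
have E : (fun h : R => h^-1 *: (((fun s => F (a + s *: u)) \o shift s0) (h *: 1)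
                                 - F (a + s0 *: u)))
   = (fun h : R => h^-1 *: ((F \o shift (a + s0 *: u)) (h *: u) - F (a + s0 *: u))).
  by apply/funext => h /=; rewrite scaler1 scalerDl addrCA addrA.
by split; rewrite /derivable /derive E.
Qed.

Lemma is_derive_translate (F : 'cV[R]_n -> R) p a w (d : R) :
  is_derive (p + a) w F d -> is_derive p w (fun q => F (q + a)) d.
Proof.
case=> dF <-.
have E : (fun h : R => h^-1 *: (((fun q => F (q + a)) \o shift p) (h *: w) - F (p + a)))
   = (fun h : R => h^-1 *: ((F \o shift (p + a)) (h *: w) - F (p + a))).
  by apply/funext => h /=; rewrite addrA.
by split; rewrite /derivable /derive E.
Qed.

Lemma is_derive_dotv (G : 'cV[R]_n -> 'cV[R]_n) p w u (dG : 'cV[R]_n) :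
  is_derive p w G dG -> is_derive p w (fun q => dotv (G q) u) (dotv dG u).
Proof.
move=> DG.
have DGi (i : 'I_n) : is_derive p w (fun q => G q i ord0) (dG i ord0).
  have dG_p : derivable G p w by [].
  have := derive_mx dG_p; rewrite derive_val => ->; rewrite mxE.
  by apply: derivableP; move/derivable_mxP: dG_p; apply.
have -> : (fun q => dotv (G q) u) = \sum_(i < n) (fun q => u i ord0 *: G q i ord0).
  apply/funext => q; rewrite /dotv; elim/big_rec2: _ => // i y1 y2 _ ->.
  by rewrite /= mulrC.
have -> : dotv dG u = \sum_(i < n) u i ord0 *: dG i ord0.
  by apply: eq_bigr => i _; rewrite mulrC.
exact: is_derive_sum.
Qed.

Lemma mvt_along_line (F dF : 'cV[R]_n -> R) a u (e : R) : 0 < e ->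
  (forall p, is_derive p u F (dF p)) ->
  exists2 s, 0 <= s <= e & F (a + e *: u) - F a = dF (a + s *: u) * e.
Proof.
move=> e0 DF.
have DFa (s : R) : is_derive s 1 (fun s => F (a + s *: u)) (dF (a + s *: u)).
  exact: is_derive_along_line.
have [s s_in Es] := MVT (f := fun s => F (a + s *: u)) (df := fun s => dF (a + s *: u))
  e0 (fun s _ => DFa s) (derivable_within_continuous (fun s _ => @ex_derive _ _ _ _ _ _ _ (DFa s))).
exists s; first by move: s_in; rewrite in_itv /= => /andP[/ltW -> /ltW ->].
by move: Es; rewrite scale0r addr0 subr0.
Qed.

End LineDerivatives.

Lemma near_segments_continuous (R : realType) (V W : normedModType R) (F : V -> W)
    (x u v : V) (e : R) : {for x, continuous F} -> 0 < e ->
  exists2 eps, 0 < eps & forall s t, 0 <= s <= eps -> 0 <= t <= eps ->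
    `|F x - F (x + s *: u + t *: v)| < e.
Proof.
move=> Fx e0; have /cvgrPdist_lt /(_ e e0) /nbhs_ballP [r r0 Fr] := Fx.
have uv0 : 0 < `|u| + `|v| + 1 by rewrite ltr_wpDl // addr_ge0.
exists (r / (`|u| + `|v| + 1)); first by rewrite divr_gt0.
move=> s t /andP[s0 se] /andP[t0 te]; apply: Fr; rewrite -ball_normE /=.
rewrite -(addrA x) opprD addrA subrr add0r normrN.
apply: le_lt_trans (ler_normD _ _) _; rewrite !normrZ !ger0_norm //.
apply: (@le_lt_trans _ _ (r / (`|u| + `|v| + 1) * (`|u| + `|v|))).
  by rewrite mulrDr lerD // ler_wpM2r.
by rewrite mulrAC ltr_pdivrMr // ltr_pM2l // ltrDl ltr01.
Qed.

Section HessianSymmetry.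
Variables (R : realType) (n : nat).
Variables (f : 'cV[R]_n -> R) (g : 'cV[R]_n -> 'cV[R]_n) (H : 'cV[R]_n -> 'M[R]_n).
Hypothesis Df : forall x v, is_derive x v f (dotv (g x) v).
Hypothesis Dg : forall x v, is_derive x v g (H x *m v).
Hypothesis H_cont : continuous H.

Lemma second_difference_mvt x u v (e : R) : 0 < e ->
  exists s t, [/\ 0 <= s <= e, 0 <= t <= e &
    f (x + e *: u + e *: v) - f (x + e *: v) - f (x + e *: u) + f x
    = dotv (H (x + s *: u + t *: v) *m v) u * e ^+ 2].
Proof.
move=> e0.
pose dF p := dotv (g (p + e *: v)) u - dotv (g p) u.
have DF p : is_derive p u (fun q => f (q + e *: v) - f q) (dF p).
  exact: is_deriveB (is_derive_translate (Df _ u)) (Df p u).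
have [s s_in Es] := mvt_along_line x e0 DF.
have Dgu p : is_derive p v (fun q => dotv (g q) u) (dotv (H p *m v) u).
  exact: is_derive_dotv.
have [t t_in Et] := mvt_along_line (x + s *: u) e0 Dgu.
exists s, t; split => //.
move: Es; rewrite /dF Et -mulrA -expr2 => <-.
by ring.
Qed.

Lemma hessian_approx_symmetric x u v (e : R) : 0 < e ->
  exists p q, [/\ `|H x - H p| < e, `|H x - H q| < e &
    dotv (H p *m v) u = dotv (H q *m u) v].
Proof.
move=> e0.
have [eps eps0 near_x] := near_segments_continuous u v (@H_cont x) e0.
have [s [t [s_in t_in Euv]]] := second_difference_mvt x u v eps0.
have [s' [t' [s'_in t'_in Evu]]] := second_difference_mvt x v u eps0.
exists (x + s *: u + t *: v), (x + t' *: u + s' *: v); split; try exact: near_x.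
rewrite [x + t' *: u + _]addrAC.
apply: (mulIf (expf_neq0 2 (lt0r_neq0 eps0))).
by rewrite -Euv -Evu [x + eps *: v + _]addrAC; ring.
Qed.

Lemma hessian_self_adjoint x : self_adjoint (H x).
Proof.
move=> u v; apply/eqP; rewrite -subr_eq0 -normr_le0.
set d := _ - _; set K := sum_abs u * sum_abs v.
have K0 : 0 <= K by rewrite mulr_ge0 ?sum_abs_ge0.
apply/ler_addgt0Pr => e e0; rewrite add0r.
have K1 : 0 < 2 * K + 1 by lra.
have e'0 : 0 < e / (2 * K + 1) by rewrite divr_gt0.
have [p [q [Hp Hq Epq]]] := hessian_approx_symmetric x u v e'0.
have -> : d = (dotv ((H x - H p) *m v) u) - dotv ((H x - H q) *m u) v.
  by rewrite !mulmxBl !dotvBl /d Epq; ring.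
apply: le_trans (ler_normB _ _) _.
have bound (M : 'M[R]_n) a b : `|M| < e / (2 * K + 1) -> sum_abs a * sum_abs b = K ->
    `|dotv (M *m b) a| <= e / (2 * K + 1) * K.
  move=> M_lt Kab; apply: le_trans (dotv_mulmx_abs_le _ _ _) _.
  by rewrite Kab ler_wpM2r // ltW.
apply: le_trans (lerD (bound _ _ _ Hp erefl) (bound _ _ _ Hq (mulrC _ _))) _.
by rewrite -mulrDr mulrAC ler_pdivrMr // ler_pM2l //; lra.
Qed.

End HessianSymmetry.

Section LocalNorms.
Variables (R : realType) (n : nat) (H : 'cV[R]_n -> 'M[R]_n).
Hypothesis H_sym : forall x, self_adjoint (H x).
Hypothesis H_pd : forall x, pos_def (H x).

Lemma lnorm_ge0 x h : 0 <= lnorm H x h.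
Proof. exact: sqrtr_ge0. Qed.

Lemma sqr_lnorm x h : lnorm H x h ^+ 2 = qform (H x) h.
Proof. by rewrite sqr_sqrtr // qform_ge0. Qed.

Lemma semi_strongly_sc_le L L' :
  L <= L' -> semi_strongly_sc H L -> semi_strongly_sc H L'.
Proof.
move=> LL' sc x y v; apply: le_trans (sc x y v) _.
by rewrite ler_wpM2r ?lnorm_ge0 // ler_wpM2r ?lnorm_ge0.
Qed.

Lemma hessian_growth L x y v : semi_strongly_sc H L ->
  qform (H y) v <= qform (H x) v * (1 + L * lnorm H x (y - x)).
Proof.
move=> sc.
have : qform (H y) v - qform (H x) v <= L * lnorm H x (y - x) * lnorm H x v * lnorm H x v.
  rewrite /qform -dotvBl -mulmxBl; apply: le_trans (ler_norm _) _.
  apply: le_trans (dotv_le_dnorm_lnorm _ _ (H_sym x) (H_pd x)) _.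
  by apply: ler_wpM2r; [exact: lnorm_ge0 | exact: sc].
by rewrite -mulrA -expr2 sqr_lnorm; lra.
Qed.

End LocalNorms.

Section AICNStep.
Variables (R : realType) (n : nat).
Variables (g : 'cV[R]_n -> 'cV[R]_n) (H : 'cV[R]_n -> 'M[R]_n) (L : R) (x : 'cV[R]_n).
Hypothesis L_gt0 : 0 < L.
Hypothesis Hx_pd : pos_def (H x).

Lemma aicn_alpha_ge0 : 0 <= aicn_alpha g H L x.
Proof.
rewrite /aicn_alpha; case: eqP => // _.
have d0 : 0 <= dnorm H x (g x) := sqrtr_ge0 _.
have Ld : 0 <= L * dnorm H x (g x) by rewrite mulr_ge0 // ltW.
rewrite divr_ge0 // addrC subr_ge0 -{1}sqrtr1 ler_sqrt; lra.
Qed.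

Lemma lnorm_aicn_step :
  lnorm H x (aicn_step g H L x - x) = aicn_alpha g H L x * dnorm H x (g x).
Proof.
rewrite /aicn_step addrAC subrr add0r /lnorm qformN qformZr -qform_invmxE //.
by rewrite sqrtrM ?sqr_ge0 // sqrtr_sqr ger0_norm // aicn_alpha_ge0.
Qed.

Lemma aicn_radius :
  L * lnorm H x (aicn_step g H L x - x) = Num.sqrt (1 + 2 * L * dnorm H x (g x)) - 1.
Proof.
rewrite lnorm_aicn_step /aicn_alpha; case: eqP => [->|_].
  by rewrite /dnorm /qform mulmx0 dotv0l sqrtr0 !(mulr0, addr0) sqrtr1 subrr.
have [->|d0] := eqVneq (dnorm H x (g x)) 0.
  by rewrite !(mulr0, addr0) sqrtr1 subrr.
by field; rewrite ?d0 ?(gt_eqF L_gt0).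
Qed.

Lemma aicn_radius_le (c : R) : 0 <= c ->
  dnorm H x (g x) <= ((2 * c + 1) ^+ 2 - 1) / (2 * L) ->
  L * lnorm H x (aicn_step g H L x - x) <= 2 * c.
Proof.
move=> c0; rewrite ler_pdivlMr ?mulr_gt0 // => small; rewrite aicn_radius lerBlDr.
rewrite -(ger0_norm (_ : 0 <= 2 * c + 1)) ?addr_ge0 ?mulr_ge0 //.
by rewrite -sqrtr_sqr ler_sqrt ?sqr_ge0 //; lra.
Qed.

End AICNStep.

Lemma aicn_contraction_bound (R : realType) (c rho t : R) :
  0 <= rho <= 2 * c -> c < 1 -> 0 <= t -> t ^+ 2 <= rho ^+ 2 * (1 + rho) ->
  (1 - c) ^+ 2 * (1 + t) <= 1.
Proof.
move=> /andP[rho0 rho_le] c1 t0 t_le.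
set a := 1 - rho / 2.
have a0 : 0 <= a by rewrite /a; lra.
have sqr_le : (a * t) ^+ 2 <= rho ^+ 2.
  rewrite exprMn; apply: le_trans (ler_wpM2l (sqr_ge0 a) t_le) _.
  have : a ^+ 2 * (1 + rho) <= 1 by rewrite /a; nra.
  nra.
have at_le : a * t <= rho by rewrite -(ler_pXn2r (n := 2)) // nnegrE mulr_ge0.
(* (1 - c)^2 (1 + t) <= a^2 (1 + t) <= a^2 + a rho = 1 - rho^2/4 *)
have ca : (1 - c) ^+ 2 <= a ^+ 2 by rewrite /a; nra.
apply: le_trans (ler_wpM2r _ ca) _; first lra.
apply: (@le_trans _ _ (a ^+ 2 + a * rho)).
  by rewrite mulrDr mulr1 expr2 -mulrA lerD2l ler_wpM2l.
by rewrite /a; nra.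
Qed.

Unset Implicit Arguments.
Theorem lemma7 (R : realType) (n : nat) (f : 'cV[R]_n -> R)
    (g : 'cV[R]_n -> 'cV[R]_n) (H : 'cV[R]_n -> 'M[R]_n)
    (Lsemi Lest c : R) (xk : 'cV[R]_n) :
  convex_fun f ->
  is_C2_with f g H ->
  (forall x, pos_def (H x)) ->
  semi_strongly_sc H Lsemi ->
  0 < Lest -> Lsemi <= Lest ->
  0 < c < 1 ->
  dnorm H xk (g xk) <= ((2 * c + 1) ^+ 2 - 1) / (2 * Lest) ->
  loewner_le (invmx (H (aicn_step g H Lest xk)))
             ((1 - c) ^-2 *: invmx (H xk)).
Proof.
move=> _ [Df [Dg H_cont]] H_pd sc L0 LL /andP[c0 c1] grad_small.
have H_sym x : self_adjoint (H x) := hessian_self_adjoint Df Dg H_cont x.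
have scL := semi_strongly_sc_le LL sc.
set y := aicn_step g H Lest xk.
set rho := Lest * lnorm H xk (y - xk).
have rho_le : 0 <= rho <= 2 * c.
  apply/andP; split; first by rewrite mulr_ge0 ?lnorm_ge0 // ltW.
  by rewrite /rho /y; apply: aicn_radius_le => //; exact: ltW.
set t := Lest * lnorm H y (xk - y).
have t0 : 0 <= t by rewrite mulr_ge0 ?lnorm_ge0 // ltW.
have t_le : t ^+ 2 <= rho ^+ 2 * (1 + rho).
  rewrite /t /rho !exprMn !sqr_lnorm // -[xk - y]opprB qformN -[leRHS]mulrA.
  by apply: ler_wpM2l; [exact: sqr_ge0 | exact: hessian_growth].
have contr := aicn_contraction_bound rho_le c1 t0 t_le.
have k_gt0 : 0 < (1 - c) ^+ 2 by rewrite exprn_gt0 // subr_gt0.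
move=> v; rewrite qformZ.
apply: (loewner_invmx (H_sym xk) (H_pd xk) (H_pd y) k_gt0) => w.
apply: le_trans (ler_wpM2l (ltW k_gt0) (hessian_growth H_sym H_pd y xk w scL)) _.
rewrite mulrCA -[leRHS]mulr1.
by apply: ler_wpM2l; [exact: qform_ge0 | exact: contr].
Qed.
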